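(* There exists a $\mathbb{C}$-algebra isomorphism $\eta_1:\hat H_{q^{-1}}\to\hat H_q$ such that $$t_0\mapsto t_0^{-1},\qquad t_1\mapsto t_0t_1^{-1}t_0^{-1},\qquad t_2\mapsto t_3^{-1}t_2^{-1}t_3,\qquad t_3\mapsto t_3^{-1}.$$ Moreover $\eta_1^2=1$, i.e. composing $\eta_1$ with the map $\hat H_q\to\hat H_{q^{-1}}$ given by the same formulas yields the identity.
   Context: $q\in\mathbb{C}^*$ is not a root of unity and a square root $q^{1/2}$ is fixed; $q^{-1/2}=(q^{1/2})^{-1}$ is used as the square root of $q^{-1}$. For $p\in\{q,q^{-1}\}$, the universal double affine Hecke algebra $\hat H_p$ of type $(C_1^\vee,C_1)$ is the $\mathbb{C}$-algebra with generators $t_n^{\pm1}$ $(n=0,1,2,3)$ and relations: $t_nt_n^{-1}=t_n^{-1}t_n=1$; $t_n+t_n^{-1}$ is central; $t_0t_1t_2t_3=p^{-1/2}$ (so $t_0t_1t_2t_3=q^{-1/2}$ in $\hat H_q$ and $t_0t_1t_2t_3=q^{1/2}$ in $\hat H_{q^{-1}}$). *)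

From HB Require Import structures.
From mathcomp Require Import all_boot all_order all_algebra.
From mathcomp Require Import reals.
From mathcomp Require Export complex.
Set Implicit Arguments. Unset Strict Implicit. Unset Printing Implicit Defensive.
Import GRing.Theory.
Local Open Scope ring_scope.

Definition i0 : 'I_4 := @Ordinal 4 0 isT.
Definition i1 : 'I_4 := @Ordinal 4 1 isT.
Definition i2 : 'I_4 := @Ordinal 4 2 isT.
Definition i3 : 'I_4 := @Ordinal 4 3 isT.

Definition central (A : pzRingType) (x : A) : Prop := forall y : A, x * y = y * x.

(* Elements t i (= t_i) and u i (= t_i^{-1}) of an F-algebra A satisfying the
   defining relations of the universal DAHA of type (C_1^vee, C_1), with
   t_0 t_1 t_2 t_3 = c (c = p^{-1/2}). *)
Record daha_rel (F : fieldType) (A : algType F) (c : F) (t u : 'I_4 -> A) : Prop := {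
  daha_inv_r : forall i, t i * u i = 1;
  daha_inv_l : forall i, u i * t i = 1;
  daha_central : forall i, central (t i + u i);
  daha_prod : t i0 * t i1 * t i2 * t i3 = c%:A }.

(* (A, t, u) is the F-algebra presented by generators t_i^{±1} and the above
   relations: it satisfies the relations and is initial among such data. *)
Arguments daha_rel : clear implicits.
Definition daha_universal (F : fieldType) (A : algType F) (c : F) (t u : 'I_4 -> A) : Prop :=
  daha_rel F A c t u /\
  forall (B : algType F) (tB uB : 'I_4 -> B), daha_rel F B c tB uB ->
    (exists f : {lrmorphism A -> B}, forall i, f (t i) = tB i /\ f (u i) = uB i) /\
    (forall f g : {lrmorphism A -> B},
        (forall i, f (t i) = g (t i) /\ f (u i) = g (u i)) -> f =1 g).
Arguments daha_universal : clear implicits.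

From HB Require Import structures.
From mathcomp Require Import all_boot all_order all_algebra.
From mathcomp Require Import reals complex.
Set Implicit Arguments. Unset Strict Implicit. Unset Printing Implicit Defensive.
Import GRing.Theory.
Local Open Scope ring_scope.

(** The prescribed images of the generators satisfy the defining relations
    with c replaced by c^-1: they are pairwise mutually inverse, the sums
    t_1 + t_1^-1 and t_2 + t_2^-1 are merely conjugated (by t_0 and t_3^-1)
    and so stay central, and the new product t_0^-1 (t_0 t_1^-1 t_0^-1)
    (t_3^-1 t_2^-1 t_3) t_3^-1 collapses to t_1^-1 t_0^-1 t_3^-1 t_2^-1,
    a conjugate of (t_0 t_1 t_2 t_3)^-1 = c^-1.  Hence the universal property
    gives algebra maps in both directions; applying the formulas twice gives
    back the generators, so both composites fix the generators and are the
    identity by uniqueness. *)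

Lemma ord4_ind (P : 'I_4 -> Prop) : P i0 -> P i1 -> P i2 -> P i3 -> forall i, P i.
Proof. by move=> ? ? ? ? [[|[|[|[|//]]]] Hk]; rewrite (bool_irrelevance Hk isT). Qed.

Lemma central_conj (R : pzRingType) (x y y' : R) :
  y * y' = 1 -> central x -> y * x * y' = x.
Proof. by move=> yy' /(_ y) <-; rewrite -mulrA yy' mulr1. Qed.

Section Eta1Def.
Variables (F : fieldType) (A : algType F).
Implicit Types (t u : 'I_4 -> A).

Definition eta1_t t u (i : 'I_4) : A :=
  match val i with
  | 0 => u i0 | 1 => t i0 * u i1 * u i0 | 2 => u i3 * u i2 * t i3 | _ => u i3
  end.

Definition eta1_u t u (i : 'I_4) : A :=
  match val i with
  | 0 => t i0 | 1 => t i0 * t i1 * u i0 | 2 => u i3 * t i2 * t i3 | _ => t i3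
  end.

Lemma eq_eta1 t u t' u' : t =1 t' -> u =1 u' ->
  forall i, eta1_t t u i = eta1_t t' u' i /\ eta1_u t u i = eta1_u t' u' i.
Proof. by move=> Ht Hu i; rewrite /eta1_t /eta1_u !Ht !Hu. Qed.

End Eta1Def.

Lemma rmorph_eta1 (F : fieldType) (A B : algType F) (f : {lrmorphism A -> B})
    (t u : 'I_4 -> A) i :
  f (eta1_t t u i) = eta1_t (f \o t) (f \o u) i /\
  f (eta1_u t u i) = eta1_u (f \o t) (f \o u) i.
Proof. by move: i; apply: ord4_ind; rewrite /eta1_t /eta1_u /= ?rmorphM. Qed.

Section Eta1Rel.
Variables (F : fieldType) (A : algType F).
Variables (c : F) (t u : 'I_4 -> A).
Hypothesis rel : daha_rel F A c t u.

Let tuK i x : t i * (u i * x) = x.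
Proof. by rewrite mulrA (daha_inv_r rel) mul1r. Qed.

Let utK i x : u i * (t i * x) = x.
Proof. by rewrite mulrA (daha_inv_l rel) mul1r. Qed.

Lemma eta1_inv_r i : eta1_t t u i * eta1_u t u i = 1.
Proof.
move: i; apply: ord4_ind; rewrite /eta1_t /eta1_u /= -?mulrA.
all: by do 2 rewrite ?tuK ?utK; rewrite ?(daha_inv_l rel) ?(daha_inv_r rel).
Qed.

Lemma eta1_inv_l i : eta1_u t u i * eta1_t t u i = 1.
Proof.
move: i; apply: ord4_ind; rewrite /eta1_t /eta1_u /= -?mulrA.
all: by do 2 rewrite ?tuK ?utK; rewrite ?(daha_inv_l rel) ?(daha_inv_r rel).
Qed.

Lemma eta1_central i : central (eta1_t t u i + eta1_u t u i).
Proof.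
have cent := daha_central rel.
move: i; apply: ord4_ind; rewrite /eta1_t /eta1_u /=.
- by rewrite addrC; apply: cent.
- by rewrite -mulrDl -mulrDr addrC central_conj ?(daha_inv_r rel).
- by rewrite -mulrDl -mulrDr addrC central_conj ?(daha_inv_l rel).
- by rewrite addrC; apply: cent.
Qed.

Lemma eta1K i :
  eta1_t (eta1_t t u) (eta1_u t u) i = t i /\ eta1_u (eta1_t t u) (eta1_u t u) i = u i.
Proof.
move: i; apply: ord4_ind; rewrite /eta1_t /eta1_u /= -?mulrA.
all: by do 2 rewrite ?tuK ?utK; rewrite ?(daha_inv_l rel) ?(daha_inv_r rel) ?mulr1.
Qed.

Hypothesis c_neq0 : c != 0.

Lemma daha_prod_inv : u i3 * u i2 * u i1 * u i0 = c^-1%:A.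
Proof.
have -> : u i3 * u i2 * u i1 * u i0 = c^-1%:A * (c%:A * (u i3 * u i2 * u i1 * u i0)).
  by rewrite mulrA -scalerAl mul1r scalerA mulVf // scale1r mul1r.
by rewrite -(daha_prod rel) -!mulrA !tuK (daha_inv_r rel) mulr1.
Qed.

Lemma eta1_prod : eta1_t t u i0 * eta1_t t u i1 * eta1_t t u i2 * eta1_t t u i3 = c^-1%:A.
Proof.
have u10 : u i1 * u i0 = t i2 * t i3 * c^-1%:A.
  by rewrite -daha_prod_inv -!mulrA !tuK.
rewrite /eta1_t /= -!mulrA utK (daha_inv_r rel) mulr1 mulrA u10.
by rewrite -!mulrA mulr_algl -!scalerAr tuK (daha_inv_r rel).
Qed.

Lemma eta1_rel : daha_rel F A c^-1 (eta1_t t u) (eta1_u t u).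
Proof.
by split; [apply: eta1_inv_r | apply: eta1_inv_l | apply: eta1_central | apply: eta1_prod].
Qed.

End Eta1Rel.

Lemma daha_endo_id (F : fieldType) (A : algType F) (c : F) (t u : 'I_4 -> A) :
  daha_universal F A c t u -> forall f : {lrmorphism A -> A},
  (forall i, f (t i) = t i /\ f (u i) = u i) -> f =1 id.
Proof. by move=> [rel unique] f; apply: (unique _ _ _ rel).2 f idfun. Qed.

Lemma eta1_cancel (F : fieldType) (c : F) (A B : algType F) (tA uA : 'I_4 -> A)
    (tB uB : 'I_4 -> B) (eta : {lrmorphism B -> A}) (eta' : {lrmorphism A -> B}) :
  daha_universal F B c tB uB ->
  (forall i, eta (tB i) = eta1_t tA uA i /\ eta (uB i) = eta1_u tA uA i) ->
  (forall i, eta' (tA i) = eta1_t tB uB i /\ eta' (uA i) = eta1_u tB uB i) ->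
  cancel eta eta'.
Proof.
move=> univB Heta Heta'; apply: (daha_endo_id univB (f := eta' \o eta)) => i /=.
rewrite (Heta i).1 (Heta i).2; have [-> ->] := rmorph_eta1 eta' tA uA i.
have [-> ->] := eq_eta1 (fun j => (Heta' j).1) (fun j => (Heta' j).2) i.
exact: eta1K univB.1 i.
Qed.

Theorem eta1_isomorphism (F : fieldType) (c : F) (c_neq0 : c != 0)
    (A : algType F) (tA uA : 'I_4 -> A) (univA : daha_universal F A c tA uA)
    (B : algType F) (tB uB : 'I_4 -> B) (univB : daha_universal F B c^-1 tB uB) :
  exists (eta : {lrmorphism A -> B}) (eta' : {lrmorphism B -> A}),
    (forall i, eta (tA i) = eta1_t tB uB i /\ eta (uA i) = eta1_u tB uB i) /\
    (forall i, eta' (tB i) = eta1_t tA uA i /\ eta' (uB i) = eta1_u tA uA i) /\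
    cancel eta eta' /\ cancel eta' eta.
Proof.
have relB' := eta1_rel univB.1 (invr_neq0 c_neq0); rewrite invrK in relB'.
have [[eta Heta] _] := univA.2 _ _ _ relB'.
have [[eta' Heta'] _] := univB.2 _ _ _ (eta1_rel univA.1 c_neq0).
exists eta, eta'; do !split=> //.
- exact: eta1_cancel univA Heta Heta'.
- exact: eta1_cancel univB Heta' Heta.
Qed.

Local Open Scope complex_scope.

Theorem lemma10p1 (R : realType) (q12 : R[i]) (Hq12 : q12 != 0)
  (Hq : forall n : nat, (0 < n)%N -> (q12 ^+ 2) ^+ n != 1)
  (Hqp : algType R[i]) (tq uq : 'I_4 -> Hqp)
  (HHq : daha_universal _ Hqp q12^-1 tq uq)
  (Hqm : algType R[i]) (tm um : 'I_4 -> Hqm)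
  (HHm : daha_universal _ Hqm q12 tm um) :
  exists (eta : {lrmorphism Hqm -> Hqp}) (eta' : {lrmorphism Hqp -> Hqm}),
    (eta (tm i0) = uq i0 /\
        eta (tm i1) = tq i0 * uq i1 * uq i0 /\
        eta (tm i2) = uq i3 * uq i2 * tq i3 /\
        eta (tm i3) = uq i3) /\
    (eta' (tq i0) = um i0 /\
        eta' (tq i1) = tm i0 * um i1 * um i0 /\
        eta' (tq i2) = um i3 * um i2 * tm i3 /\
        eta' (tq i3) = um i3) /\
    cancel eta eta' /\ cancel eta' eta.
Proof.
have [eta [eta' [Heta [Heta' cancels]]]] := eta1_isomorphism Hq12 HHm HHq.
exists eta, eta'; split; last split=> //.
- by rewrite !(fun i => (Heta i).1).
- by rewrite !(fun i => (Heta' i).1).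
Qed.
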